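(* Let $1\le k\le n$, $p=c_n^k$, and let $X$ be a real symmetric $n\times n$ matrix with diagonalization $X=Q\Lambda Q^{\intercal}$ ($Q$ orthogonal, $\Lambda$ diagonal). Then for each $i\in[n]$, $$p|_{\{i\}}(X)=X_{ii}\,c_n^{k-1}(\Lambda)-X_i^{\intercal}Q\,\nabla c_n^{k-1}(\Lambda)\,Q^{\intercal}X_i,$$ where $X_i$ is the $i$-th column of $X$.
   Context: $c_n^j(X)=\sum_{S\subseteq[n],|S|=j}\det(X|_S)$ with $X|_S$ the principal submatrix indexed by $S$; $p|_{\{i\}}(X)=\sum_{|S|=k,\,i\in S}\det(X|_S)$. For $f$ a function of an $n\times n$ matrix, $\nabla f$ is the matrix $G$ with $G_{ij}=\frac{\partial f}{\partial X_{ij}}$. *)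

From HB Require Import structures.
From mathcomp Require Import all_boot all_order all_algebra.
From mathcomp Require Import all_classical all_reals all_analysis.
Set Implicit Arguments. Unset Strict Implicit. Unset Printing Implicit Defensive.
Import Order.TTheory GRing.Theory Num.Theory.
Local Open Scope ring_scope.

Definition princ_sub (R : Type) (n : nat) (X : 'M[R]_n) (S : {set 'I_n})
  : 'M[R]_#|S| := \matrix_(a, b) X (enum_val a) (enum_val b).

Definition elem_c (R : comNzRingType) (n j : nat) (X : 'M[R]_n) : R :=
  \sum_(S : {set 'I_n} | #|S| == j) \det (princ_sub X S).

(* p|_{i}(X) = sum_{|S| = k, i in S} det(X|_S), where p = c_n^k *)
Definition restr_c (R : comNzRingType) (n k : nat) (i : 'I_n) (X : 'M[R]_n) : R :=
  \sum_(S : {set 'I_n} | (#|S| == k) && (i \in S)) \det (princ_sub X S).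

Definition partial_entry (R : realType) (n : nat) (f : 'M[R]_n -> R)
  (X : 'M[R]_n) (i j : 'I_n) : R :=
  derive1 (fun t : R => f (X + t *: delta_mx i j)) 0.

Definition grad (R : realType) (n : nat) (f : 'M[R]_n -> R) (X : 'M[R]_n)
  : 'M[R]_n := \matrix_(i, j) partial_entry f X i j.

(* Work with the pencil Phi(M) = 1 + x M over R[x].  Expanding the determinant
   over the principal minors gives det Phi(M) = sum_j c_n^j(M) x^j.  Changing one
   entry of L changes det Phi(L) by a multiple of a cofactor, so the gradient of
   c_n^j at L is the x^j coefficient of x adj(Phi(L))^T.  Zeroing row i of X
   kills exactly the minors containing i, and turns det Phi(X) into
   adj(Phi(X))_ii; the Cramer identities Phi(X) adj = det and X adj Phi(X) =
   det X then give
     det Phi(X) - adj(Phi(X))_ii = x (det Phi(X) X_ii - x (X adj(Phi(X)) X)_ii),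
   and the x^k coefficient of the left side is p|_{i}(X).  Finally Phi(Q L Q^T) = Q Phi(L) Q^T
   moves det and adj from X to L. *)

From HB Require Import structures.
From mathcomp Require Import all_boot all_order all_algebra.
From mathcomp Require Import all_classical all_reals all_analysis.
From mathcomp Require Import fingroup perm.
Import Order.TTheory GRing.Theory Num.Theory.

Set Implicit Arguments.
Unset Strict Implicit.
Unset Printing Implicit Defensive.

Local Open Scope ring_scope.

Section ExtendPerm.
Variables (T : finType) (S : {set T}) (x0 : T).
Hypothesis Sx0 : x0 \in S.

Definition extend_perm_fun (t : 'S_#|S|) (x : T) : T :=
  if x \in S then enum_val (t (enum_rank_in Sx0 x)) else x.

Lemma extend_perm_fun_inj t : injective (extend_perm_fun t).
Proof.
move=> x y; rewrite /extend_perm_fun.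
case: ifP => Sx; case: ifP => Sy.
- move/enum_val_inj/perm_inj => e.
  by rewrite -(enum_rankK_in Sx0 Sx) -(enum_rankK_in Sx0 Sy) e.
- by move=> e; move: Sy; rewrite -e enum_valP.
- by move=> e; move: Sx; rewrite e enum_valP.
- by [].
Qed.

Definition extend_perm t : {perm T} := perm (@extend_perm_fun_inj t).

Lemma extend_perm_enum_val t a : extend_perm t (enum_val a) = enum_val (t a).
Proof. by rewrite permE /extend_perm_fun enum_valP enum_valK_in. Qed.

Lemma extend_perm_out t x : x \notin S -> extend_perm t x = x.
Proof. by rewrite permE /extend_perm_fun => /negbTE ->. Qed.

Lemma perm_on_extend_perm t : perm_on S (extend_perm t).
Proof.
by apply/fintype.subsetP => x; rewrite inE; apply: contraR => /extend_perm_out ->.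
Qed.

Lemma extend_perm_inj : injective extend_perm.
Proof.
move=> t1 t2 e; apply/permP => a; apply: enum_val_inj.
by rewrite -!extend_perm_enum_val e.
Qed.

Lemma extend_perm_surj (s : {perm T}) :
  perm_on S s -> exists t, s = extend_perm t.
Proof.
move=> Ss; have s_enum (a : 'I_#|S|) : s (enum_val a) \in S.
  by rewrite (perm_closed _ Ss) enum_valP.
have t_inj : injective (fun a : 'I_#|S| => enum_rank_in Sx0 (s (enum_val a))).
  move=> a b /= e; apply/enum_val_inj/(@perm_inj _ s).
  by rewrite -(enum_rankK_in Sx0 (s_enum a)) e enum_rankK_in.
exists (perm t_inj); apply/permP => x; case: (boolP (x \in S)) => Sx.
  rewrite -(enum_rankK_in Sx0 Sx) extend_perm_enum_val permE.
  by rewrite (enum_rankK_in _ (s_enum _)).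
by rewrite extend_perm_out // (out_perm Ss).
Qed.

Lemma extend_permM t1 t2 :
  extend_perm (t1 * t2)%g = (extend_perm t1 * extend_perm t2)%g.
Proof.
apply/permP => x; rewrite permM; case: (boolP (x \in S)) => Sx.
  by rewrite -(enum_rankK_in Sx0 Sx) !extend_perm_enum_val permM.
by rewrite !extend_perm_out.
Qed.

Lemma extend_perm1 : extend_perm 1%g = 1%g.
Proof.
apply/permP => x; rewrite perm1; case: (boolP (x \in S)) => Sx.
  by rewrite -(enum_rankK_in Sx0 Sx) extend_perm_enum_val perm1.
by rewrite extend_perm_out.
Qed.

Lemma extend_tperm a b :
  extend_perm (tperm a b) = tperm (enum_val a) (enum_val b).
Proof.
apply/permP => x; case: (boolP (x \in S)) => Sx.
  rewrite -(enum_rankK_in Sx0 Sx) extend_perm_enum_val.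
  exact: inj_tperm enum_val_inj.
have enum_val_neq (c : 'I_#|S|) : enum_val c != x.
  by apply: contraNneq Sx => <-; apply: enum_valP.
by rewrite extend_perm_out // tpermD ?enum_val_neq.
Qed.

Lemma odd_extend_perm t : odd_perm (extend_perm t) = odd_perm t.
Proof.
have [ts -> dts] := prod_tpermP t.
rewrite (big_morph _ extend_permM extend_perm1).
under eq_bigr do rewrite extend_tperm.
rewrite -(big_map (fun ab => (enum_val ab.1, enum_val ab.2)) predT
                  (fun ab => tperm ab.1 ab.2)).
rewrite !odd_perm_prod ?size_map // all_map.
by apply: sub_all dts => -[a b]; rewrite /= (inj_eq enum_val_inj).
Qed.

Lemma big_perm_on_extend (V : nmodType) (F : {perm T} -> V) :
  \sum_(s | perm_on S s) F s = \sum_(t : 'S_#|S|) F (extend_perm t).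
Proof.
transitivity (\sum_(s in extend_perm @: [set: 'S_#|S|]) F s); last first.
  rewrite big_imset /=; last exact: in2W extend_perm_inj.
  by apply: eq_bigl => t; rewrite inE.
apply: eq_bigl => s; apply/idP/imsetP => [/extend_perm_surj [t ->] | [t _ ->]].
  by exists t.
exact: perm_on_extend_perm.
Qed.

End ExtendPerm.

Lemma det_princ_sub0 (R : comNzRingType) n (M : 'M[R]_n) :
  \det (princ_sub M finset.set0) = 1.
Proof.
by move: (princ_sub M finset.set0); rewrite cards0 => A; apply: det_mx00.
Qed.

Lemma det_princ_sub_perm_on (R : comNzRingType) n (M : 'M[R]_n) (S : {set 'I_n}) :
  \det (princ_sub M S) =
    \sum_(s | perm_on S s) (-1) ^+ s * \prod_(i in S) M i (s i).
Proof.
have [-> | [x0 Sx0]] := set_0Vmem S.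
  rewrite det_princ_sub0 (big_pred1 1%g) ?odd_perm1 ?big_set0 ?mulr1 // => s.
  by apply/idP/eqP => [/perm_on_id -> // | ->]; rewrite ?cards0 ?perm_on1.
rewrite (big_perm_on_extend Sx0); apply: eq_bigr => t _.
rewrite odd_extend_perm; congr (_ * _); rewrite [RHS]big_enum_val.
by apply: eq_bigr => a _; rewrite extend_perm_enum_val mxE.
Qed.

Lemma prod_fixed_notin (R : comPzSemiRingType) (T : finType) (S : {set T})
    (s : {perm T}) :
  \prod_(i | i \notin S) ((i == s i)%:R : R) = (perm_on S s)%:R.
Proof.
have [Ss | /fintype.subsetPn [x]] := boolP (perm_on S s).
  by rewrite big1 // => i /(out_perm Ss) ->; rewrite eqxx.
rewrite inE => sx_x Sx.
by rewrite (bigD1 x) //= eq_sym (negbTE sx_x) mul0r.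
Qed.

Lemma det1D_princ_sub (R : comNzRingType) n (M : 'M[R]_n) :
  \det (1%:M + M) = \sum_(S : {set 'I_n}) \det (princ_sub M S).
Proof.
transitivity (\sum_(s : 'S_n) \sum_(S : {set 'I_n}) (-1) ^+ s *
   \prod_i (if i \in S then M i (s i) else (i == s i)%:R)).
  apply: eq_bigr => s _; rewrite -mulr_sumr -bigA_distr.
  by congr (_ * _); apply: eq_bigr => i _; rewrite !mxE addrC.
rewrite exchange_big; apply: eq_bigr => S _ /=.
rewrite det_princ_sub_perm_on [RHS]big_mkcond; apply: eq_bigr => s _.
rewrite (bigID (mem S)) /=.
rewrite [Y in _ * (Y * _)](eq_bigr (fun i => M i (s i))) => [|i ->] //.
rewrite [Y in _ * (_ * Y)](eq_bigr (fun i => (i == s i)%:R)); last first.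
  by move=> i /negbTE ->.
by rewrite prod_fixed_notin; case: (perm_on S s); rewrite ?mulr1 ?mulr0.
Qed.

Definition pencil (R : comNzRingType) n (M : 'M[R]_n) : 'M[{poly R}]_n :=
  1%:M + 'X *: map_mx polyC M.

Lemma coef_det_pencil (R : comNzRingType) n (M : 'M[R]_n) j :
  (\det (pencil M))`_j = elem_c j M.
Proof.
rewrite det1D_princ_sub coef_sum /elem_c [RHS]big_mkcond /=.
apply: eq_bigr => S _.
have -> : princ_sub ('X *: map_mx polyC M) S = 'X *: map_mx polyC (princ_sub M S).
  by apply/matrixP => a b; rewrite !mxE.
rewrite detZ det_map_mx /= mulrC coefCM coefXn eq_sym.
by case: (_ == _); rewrite ?mulr1 ?mulr0.
Qed.

Lemma elem_c0 (R : comNzRingType) n (M : 'M[R]_n) : elem_c 0 M = 1.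
Proof.
rewrite /elem_c (big_pred1 finset.set0) ?det_princ_sub0 // => S.
by rewrite cards_eq0.
Qed.

Lemma det_pencil_neq0 (R : comNzRingType) n (M : 'M[R]_n) : \det (pencil M) != 0.
Proof.
apply: contra_neq (oner_neq0 R) => detM0.
by rewrite -(elem_c0 M) -coef_det_pencil detM0 coef0.
Qed.

Lemma adj_unique (R : idomainType) n (A B : 'M[R]_n) :
  \det A != 0 -> B *m A = (\det A)%:M -> \adj A = B.
Proof.
move=> detA_neq0 BA; suff : \det A *: (\adj A - B) = 0.
  by move/eqP; rewrite scalemx_eq0 (negbTE detA_neq0) subr_eq0 => /eqP.
by rewrite -mul_mx_scalar -mul_mx_adj mulmxA mulmxBl mul_adj_mx BA subrr mul0mx.
Qed.

Lemma det_conj (R : comNzRingType) n (Q A : 'M[R]_n) :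
  Q *m Q^T = 1%:M -> \det (Q *m A *m Q^T) = \det A.
Proof.
by move=> QQt; rewrite !det_mulmx mulrAC -det_mulmx QQt det1 mul1r.
Qed.

Lemma adj_conj (R : idomainType) n (Q A : 'M[R]_n) :
  Q *m Q^T = 1%:M -> \det A != 0 -> \adj (Q *m A *m Q^T) = Q *m \adj A *m Q^T.
Proof.
move=> QQt detA_neq0; have QtQ := mulmx1C QQt.
apply: adj_unique; rewrite det_conj //.
by rewrite !mulmxA -(mulmxA _ Q^T) QtQ mulmx1 -(mulmxA _ _ A) mul_adj_mx
  mul_mx_scalar -scalemxAl QQt scalemx1.
Qed.

Lemma pencil_conj (R : comNzRingType) n (Q A : 'M[R]_n) :
  Q *m Q^T = 1%:M ->
  pencil (Q *m A *m Q^T) = map_mx polyC Q *m pencil A *m (map_mx polyC Q)^T.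
Proof.
move=> QQt; rewrite /pencil mulmxDr mulmx1 mulmxDl map_trmx -map_mxM QQt map_mx1.
by rewrite -scalemxAr -scalemxAl !map_mxM.
Qed.

Lemma elem_c_conj (R : comNzRingType) n j (Q A : 'M[R]_n) :
  Q *m Q^T = 1%:M -> elem_c j (Q *m A *m Q^T) = elem_c j A.
Proof.
move=> QQt; rewrite -!coef_det_pencil pencil_conj // det_conj //.
by rewrite map_trmx -map_mxM QQt map_mx1.
Qed.

Lemma adj_pencil_conj (R : idomainType) n (Q A : 'M[R]_n) :
  Q *m Q^T = 1%:M ->
  \adj (pencil (Q *m A *m Q^T)) =
    map_mx polyC Q *m \adj (pencil A) *m (map_mx polyC Q)^T.
Proof.
move=> QQt; rewrite pencil_conj // adj_conj ?det_pencil_neq0 //.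
by rewrite map_trmx -map_mxM QQt map_mx1.
Qed.

Definition zero_row (R : nmodType) m n (i : 'I_m) (X : 'M[R]_(m, n)) :=
  \matrix_(r, s) if r == i then 0 else X r s.

Lemma det_princ_sub_zero_row (R : comNzRingType) n i (X : 'M[R]_n)
    (S : {set 'I_n}) :
  i \in S -> \det (princ_sub (zero_row i X) S) = 0.
Proof.
move=> Si; rewrite (expand_det_row _ (enum_rank_in Si i)) big1 // => j _.
by rewrite !mxE enum_rankK_in // eqxx mul0r.
Qed.

Lemma princ_sub_zero_row (R : comNzRingType) n i (X : 'M[R]_n) (S : {set 'I_n}) :
  i \notin S -> princ_sub (zero_row i X) S = princ_sub X S.
Proof.
move=> Si; apply/matrixP => a b; rewrite !mxE; case: eqP => // ai.
by move: Si; rewrite -ai enum_valP.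
Qed.

Lemma restr_cE (R : comNzRingType) n k i (X : 'M[R]_n) :
  restr_c k i X = elem_c k X - elem_c k (zero_row i X).
Proof.
rewrite /elem_c (bigID (fun S : {set 'I_n} => i \in S)) /=.
rewrite [Y in _ - Y](bigID (fun S : {set 'I_n} => i \in S)) /=.
rewrite [Y in _ - (Y + _)]big1 => [|S /andP[_ Si]]; last first.
  exact: det_princ_sub_zero_row.
rewrite add0r [Y in _ - Y](eq_bigr (fun S => \det (princ_sub X S))) ?addrK //.
by move=> S /andP[_ Si]; rewrite princ_sub_zero_row.
Qed.

Lemma det_pencil_zero_row (R : comNzRingType) n i (X : 'M[R]_n) :
  \det (pencil (zero_row i X)) = \adj (pencil X) i i.
Proof.
rewrite (expand_det_row _ i) (bigD1 i) //= big1 => [|j ji]; last first.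
  by rewrite !mxE eqxx eq_sym (negbTE ji) mulr0 addr0 mul0r.
rewrite !mxE !eqxx /= polyC0 mulr0 !addr0 mul1r /cofactor; congr (_ * \det _).
by apply/matrixP => u v; rewrite !mxE lift_eqF.
Qed.

Lemma det_pencil_sub_adj (R : comNzRingType) n i (X : 'M[R]_n) :
  let Xp := map_mx polyC X in
  \det (pencil X) - \adj (pencil X) i i =
    'X * (\det (pencil X) * (X i i)%:P - 'X * (Xp *m \adj (pencil X) *m Xp) i i).
Proof.
move=> Xp; set A := \adj (pencil X); set d := \det (pencil X).
have mul_pencil_adj : A + 'X *: (Xp *m A) = d%:M.
  by rewrite -mul_mx_adj mulmxDl mul1mx scalemxAl.
have mul_Xp_adj_pencil : Xp *m A + 'X *: (Xp *m A *m Xp) = d *: Xp.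
  rewrite /d -[in RHS]mul_mx_scalar -mul_adj_mx.
  by rewrite mulmxA mulmxDr mulmx1 -scalemxAr.
move: (Xp *m A *m Xp) mul_Xp_adj_pencil => Z.
move: (Xp *m A) mul_pencil_adj => XA.
move=> /matrixP/(_ i i) AXA_ii /matrixP/(_ i i) XAZ_ii; clearbody A.
rewrite !mxE eqxx mulr1n in AXA_ii; rewrite !mxE in XAZ_ii.
by rewrite -XAZ_ii -AXA_ii addrAC subrr add0r addrK.
Qed.

Lemma restr_c_pencil (R : comNzRingType) n k i (X : 'M[R]_n) :
  (0 < k)%N ->
  let Xp := map_mx polyC X in
  restr_c k i X =
    elem_c k.-1 X * X i i - ('X * (Xp *m \adj (pencil X) *m Xp) i i)`_k.-1.
Proof.
move=> k_gt0 Xp.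
rewrite restr_cE -!coef_det_pencil det_pencil_zero_row -coefB det_pencil_sub_adj.
by rewrite coefXM -(prednK k_gt0) /= coefB coefMC.
Qed.

Lemma det_add_delta_mx (R : comNzRingType) n (A : 'M[R]_n) s a b :
  \det (A + s *: delta_mx a b) = \det A + s * cofactor A a b.
Proof.
have cofactor_a j : cofactor (A + s *: delta_mx a b) a j = cofactor A a j.
  rewrite /cofactor; congr (_ * \det _); apply/matrixP => u v.
  by rewrite !mxE eq_sym (negbTE (neq_lift a u)) mulr0 addr0.
rewrite (expand_det_row _ a) (expand_det_row A a).
under eq_bigr => j _ do
  rewrite cofactor_a !mxE eqxx mulrDl.
rewrite big_split /=; congr (_ + _).
rewrite (bigD1 b) //= eqxx mulr1 big1 ?addr0 // => j /negbTE ->.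
by rewrite mulr0 mul0r.
Qed.

Lemma derive1_affine (R : realType) (a b x : R) :
  derive1 (fun t : R => a + t * b) x = b.
Proof.
by rewrite derive1E derive_val add0r mul1r scaler0 add0r /GRing.scale /= mulr1.
Qed.

Lemma grad_elem_c (R : realType) n j (L : 'M[R]_n) :
  grad (elem_c j) L = map_mx (coefp j) ('X *: (\adj (pencil L))^T).
Proof.
apply/matrixP => a b; rewrite !mxE /partial_entry.
have pencil_update t :
    pencil (L + t *: delta_mx a b) = pencil L + (t%:P * 'X) *: delta_mx a b.
  by rewrite /pencil map_mxD map_mxZ map_delta_mx scalerDr addrA scalerA mulrC.
under eq_fun => t do rewrite -coef_det_pencil pencil_update det_add_delta_mx
  coefD coef_det_pencil -mulrA coefCM.
exact: derive1_affine.
Qed.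

Lemma coefp_quad_form (R : comNzRingType) n j (u : 'cV[R]_n)
    (P : 'M[{poly R}]_n) :
  (u^T *m map_mx (coefp j) P *m u) 0 0 =
    (((map_mx polyC u)^T *m P *m map_mx polyC u) 0 0)`_j.
Proof.
rewrite !mxE coef_sum; apply: eq_bigr => b _; rewrite !mxE coefMC coef_sum.
by congr (_ * _); apply: eq_bigr => a _; rewrite !mxE coefCM.
Qed.

Lemma quad_form_tr (R : comNzRingType) n (u : 'cV[R]_n) (A : 'M[R]_n) :
  (u^T *m A^T *m u) 0 0 = (u^T *m A *m u) 0 0.
Proof.
transitivity ((u^T *m A *m u)^T 0 0); last by rewrite mxE.
by rewrite !trmx_mul trmxK mulmxA.
Qed.

Lemma mulmx_row_col (R : comNzRingType) m n p (A : 'M[R]_(m, n))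
    (B : 'M[R]_(n, p)) i j :
  (A *m B) i j = (row i A *m col j B) 0 0.
Proof. by rewrite !mxE; apply: eq_bigr => k _; rewrite !mxE. Qed.

Theorem mainTheorem13 (R : realType) (n k : nat) (X Q L : 'M[R]_n) (i : 'I_n) :
  (1 <= k)%N -> (k <= n)%N ->
  X^T = X ->
  Q *m Q^T = 1%:M -> Q^T *m Q = 1%:M ->
  is_diag_mx L ->
  X = Q *m L *m Q^T ->
  restr_c k i X =
    X i i * elem_c (k.-1) L
    - (((col i X)^T *m Q *m grad (elem_c (k.-1)) L *m Q^T *m col i X) 0 0).
Proof.
move=> k_gt0 _ X_sym QQt _ _ XE.
set Xp := map_mx polyC X; set Qp := map_mx polyC Q; set u := Q^T *m col i X.
have adjX : \adj (pencil X) = Qp *m \adj (pencil L) *m Qp^T.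
  by rewrite XE adj_pencil_conj.
have up : map_mx polyC u = Qp^T *m col i Xp by rewrite map_mxM map_trmx map_col.
have rowXp : row i Xp = (col i Xp)^T by rewrite tr_col /Xp map_trmx X_sym.
rewrite restr_c_pencil // [in elem_c _ X]XE elem_c_conj // mulrC; congr (_ - _).
have -> : (col i X)^T *m Q = u^T by rewrite trmx_mul trmxK.
rewrite -[_ *m Q^T *m col i X]mulmxA -/u grad_elem_c coefp_quad_form.
rewrite -scalemxAr -scalemxAl [in RHS]mxE quad_form_tr up trmx_mul trmxK.
by rewrite -/Xp [in LHS]mulmx_row_col row_mul rowXp adjX !mulmxA.
Qed.
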